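(* Let $G=(V,E)$ be a graph and $v\in V$. Then $v\in \mathrm{anticore}(G)$ if and only if $\gamma(G_v+u)=\gamma(G)+1$.
   Context: All graphs are finite, simple and undirected. A set $S\subseteq V$ is dominating if every vertex of $V$ is in $S$ or adjacent to a vertex of $S$; $\gamma(G)$ is the minimum size of a dominating set, and a minimum dominating set (mds, or $\gamma$-set) is a dominating set of size $\gamma(G)$. $\mathrm{core}(G)$ is the set of vertices belonging to every mds of $G$, $\mathrm{corona}(G)$ is the set of vertices belonging to at least one mds of $G$, and $\mathrm{anticore}(G)=V\setminus \mathrm{corona}(G)$. For $v\in V$, $G_v+u$ denotes the graph obtained from $G$ by adding one new vertex $u$ and the single edge $uv$. *)

(* A finite simple graph is a symmetric irreflexive
   relation e on a finType T (vertex set = T). *)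
From mathcomp Require Import all_boot.
Set Implicit Arguments. Unset Strict Implicit. Unset Printing Implicit Defensive.

Definition dominating (T : finType) (e : rel T) (S : {set T}) : bool :=
  [forall x, (x \in S) || [exists y in S, e y x]].

(* domination number: minimum size of a dominating set
   (the full vertex set is always dominating, bound #|T|). *)
Definition gamma (T : finType) (e : rel T) : nat :=
  \big[minn/#|T|]_(S : {set T} | dominating e S) #|S|.

Definition mds (T : finType) (e : rel T) (S : {set T}) : bool :=
  dominating e S && (#|S| == gamma e).

Definition corona (T : finType) (e : rel T) : {set T} :=
  [set v | [exists S : {set T}, mds e S && (v \in S)]].

Definition anticore (T : finType) (e : rel T) : {set T} := ~: corona e.

(* G_v + u : vertex type option T, new vertex u = None, adjacent only to v. *)
Definition addleaf (T : finType) (e : rel T) (v : T) : rel (option T) :=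
  fun a b => match a, b with
             | Some x, Some y => e x y
             | None, Some y => y == v
             | Some x, None => x == v
             | None, None => false
             end.

From mathcomp Require Import all_boot.

(* Lifting an mds of G and adding the leaf u dominates
   G_v + u, so gamma e' <= gamma e + 1.  Projecting u onto v turns any
   dominating set of G_v + u into one of G, no larger, containing v; so if
   gamma e' <= gamma e, the projection of an mds of G_v + u is an mds of G
   through v.  Conversely an mds of G through v already dominates G_v + u.
   Hence v lies in the corona exactly when gamma e' <= gamma e, and otherwise
   gamma e' = gamma e + 1. *)

Set Implicit Arguments.
Unset Strict Implicit.
Unset Printing Implicit Defensive.

Section Domination.
Variables (T : finType) (e : rel T).

Lemma gamma_le_card S : dominating e S -> gamma e <= #|S|.
Proof.
move=> domS; rewrite /gamma.
have: S \in index_enum {set T} by rewrite /index_enum -enumT mem_enum.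
elim: (index_enum _) => [//|A r IH]; rewrite inE big_cons => /orP [/eqP <-|Sr].
  by rewrite domS geq_minl.
by case: ifP => _; [apply: leq_trans (geq_minr _ _) _|]; apply: IH.
Qed.

Lemma mds_exists : exists S, mds e S.
Proof.
have [S [domS cardS]] : exists S, dominating e S /\ #|S| = gamma e.
  rewrite /gamma.
  apply: (big_ind (fun n => exists S, dominating e S /\ #|S| = n)) => //.
  - by exists setT; rewrite cardsT; split=> //; apply/forallP => x; rewrite inE.
  - move=> m n [S1 [dom1 <-]] [S2 [dom2 <-]].
    by rewrite /minn; case: ltnP => _; [exists S1 | exists S2].
  - by move=> S domS; exists S.
by exists S; rewrite /mds domS cardS eqxx.
Qed.

Lemma mds_card_le S : dominating e S -> #|S| <= gamma e -> mds e S.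
Proof.
by move=> domS le_S; rewrite /mds domS eqn_leq le_S gamma_le_card.
Qed.

Lemma mem_corona S x : mds e S -> x \in S -> x \in corona e.
Proof. by move=> mdsS xS; rewrite inE; apply/existsP; exists S; rewrite mdsS. Qed.

End Domination.

Section AddLeaf.
Variables (T : finType) (e : rel T) (v : T).
Local Notation e' := (addleaf e v).

Lemma dominating_addleaf S :
  dominating e S -> dominating e' (None |: (Some @: S)).
Proof.
move=> /forallP domS; apply/forallP => -[x|]; last by rewrite setU11.
have /orP [xS|/existsP [y /andP [yS yx]]] := domS x.
  by rewrite in_setU1 imset_f ?orbT.
apply/orP; right; apply/existsP; exists (Some y).
by rewrite in_setU1 imset_f.
Qed.

Lemma dominating_addleaf_mem S :
  dominating e S -> v \in S -> dominating e' (Some @: S).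
Proof.
move=> /forallP domS vS; apply/forallP => -[x|].
- have /orP [xS|/existsP [y /andP [yS yx]]] := domS x; first by rewrite imset_f.
  by apply/orP; right; apply/existsP; exists (Some y); rewrite imset_f.
- by apply/orP; right; apply/existsP; exists (Some v); rewrite imset_f /=.
Qed.

Lemma dominating_addleaf_proj S' :
  dominating e' S' -> dominating e (odflt v @: S') /\ v \in odflt v @: S'.
Proof.
move=> /forallP domS'; split.
- apply/forallP => x.
  have /orP [xS'|/existsP [[y|] /andP [yS' yx]]] := domS' (Some x).
  + by rewrite (imset_f (odflt v) xS').
  + by apply/orP; right; apply/existsP; exists y; rewrite (imset_f (odflt v) yS').
  + by rewrite /= in yx; rewrite (eqP yx) (imset_f (odflt v) yS').
- have /orP [uS'|/existsP [[y|] /andP [yS' yu]]] := domS' None.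
  + exact: (imset_f (odflt v) uS').
  + by move: yu => /= /eqP yv; apply/imsetP; exists (Some y); rewrite // yv.
  + by [].
Qed.

Lemma gamma_addleaf_le : gamma e' <= gamma e + 1.
Proof.
have [S /andP [domS /eqP <-]] := mds_exists e.
apply: leq_trans (gamma_le_card (dominating_addleaf domS)) _.
by rewrite cardsU1 (card_imset _ (@Some_inj _)) addnC leq_add2l leq_b1.
Qed.

Lemma corona_addleaf : (v \in corona e) = (gamma e' <= gamma e).
Proof.
apply/idP/idP.
- rewrite inE => /existsP [S /andP [/andP [domS /eqP cardS] vS]].
  rewrite -cardS -(card_imset _ (@Some_inj _)).
  exact: gamma_le_card (dominating_addleaf_mem domS vS).
- move=> le_e'e; have [S' /andP [domS' /eqP cardS']] := mds_exists e'.
  have [domS vS] := dominating_addleaf_proj domS'.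
  apply: (mem_corona (mds_card_le domS _)) vS.
  by rewrite (leq_trans (leq_imset_card _ _)) // cardS'.
Qed.

End AddLeaf.

Theorem theorem3 (T : finType) (e : rel T) (esym : symmetric e)
  (eirr : irreflexive e) (v : T) :
  v \in anticore e <-> gamma (addleaf e v) = (gamma e + 1)%N.
Proof.
have hi := gamma_addleaf_le e v.
rewrite inE corona_addleaf -ltnNge; split => [lt_e_e'|->].
- by apply/eqP; rewrite eqn_leq hi addn1.
- by rewrite addn1.
Qed.
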